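(* Let $f$ be a Moufang permutation on an abelian group $(X,+)$ with associated biadditive mapping $\beta$. Then $(f^3,\beta)$ is a construction pair on $(X,+)$.
   Context: A permutation $f$ of an abelian group $(X,+)$ is a Moufang permutation if the map $\beta(x,y)=f^{-1}(f(x)+f(y))-x-y$ (P1) is symmetric, alternating ($\beta(x,x)=0$) and biadditive, and for all $x,y,z\in X$: (P2) $\beta(\beta(x,y),z)=0$ and (P3) $\beta(f(x),f(y))=f(\beta(f^3(x),y))$; $\beta$ is the associated biadditive mapping. A construction pair on $(X,+)$ is a pair $(g,\gamma)$ where $g$ is a permutation of $X$ and $\gamma:X\times X\to X$ is symmetric, alternating and biadditive, such that for all $x,y,z\in X$: (C1) $g^{-1}(g(x)+g(y))=x+y+\gamma(x,y)+g^{-1}(\gamma(x,y))+g^{-2}(\gamma(x,y))$; (C2) $\gamma(\gamma(x,y),z)=0$; (C3) $g^{-1}(\gamma(x,y))=\gamma(g(x),y)$. *)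

From mathcomp Require Import all_boot all_algebra.
Set Implicit Arguments. Unset Strict Implicit. Unset Printing Implicit Defensive.
Import GRing.Theory.
Local Open Scope ring_scope.

Definition is_perm_with_inv (X : Type) (p pinv : X -> X) :=
  cancel p pinv /\ cancel pinv p.

Definition sym_alt_biadd (X : zmodType) (b : X -> X -> X) :=
  [/\ forall x y, b x y = b y x,
      forall x, b x x = 0 &
      forall x y z, b (x + y) z = b x z + b y z /\ b x (y + z) = b x y + b x z].

Definition assoc_beta (X : zmodType) (f finv : X -> X) : X -> X -> X :=
  fun x y => finv (f x + f y) - x - y.

Definition moufang_perm (X : zmodType) (f finv : X -> X) :=
  let beta := assoc_beta f finv in
  [/\ is_perm_with_inv f finv,
      sym_alt_biadd beta,                                        (* P1 *)
      forall x y z, beta (beta x y) z = 0 &                      (* P2 *)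
      forall x y, beta (f x) (f y) = f (beta (f (f (f x))) y)].  (* P3 *)

Definition construction_pair (X : zmodType) (g ginv : X -> X) (gamma : X -> X -> X) :=
  [/\ is_perm_with_inv g ginv,
      sym_alt_biadd gamma,
      forall x y, ginv (g x + g y)
                  = x + y + gamma x y + ginv (gamma x y) + ginv (ginv (gamma x y)), (* C1 *)
      forall x y z, gamma (gamma x y) z = 0 &                                     (* C2 *)
      forall x y, ginv (gamma x y) = gamma (g x) y].                              (* C3 *)

From mathcomp Require Import all_boot all_algebra.
Local Open Scope ring_scope.
Import GRing.Theory.

(* The argument is a computation with three facts:
   - by definition of beta, finv (f x + f y) = x + y + beta x y;
   - by (P3) applied to finv u, finv v, the inverse finv maps values of beta
     to values of beta: finv (beta u v) = beta (f (f u)) (finv v); hence by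
     (P2) finv is additive as soon as one summand is a value of beta;
   - (P3) rewritten as finv (beta (f x) (f y)) = beta (f^3 x) y, together
     with the symmetry beta (f^3 x) y = beta x (f^3 y), shows that
     finv^3 (beta x y) = beta (f^3 x) y, which is (C3) for g = f^3.
   Expanding finv^3 (f^3 x + f^3 y) one finv at a time with these rules gives
   (C1); (C2) is (P2), and the rest is part of the hypotheses. *)

Lemma finv_add_assoc_beta (X : zmodType) (f finv : X -> X) (x y : X) :
  finv (f x + f y) = x + y + assoc_beta f finv x y.
Proof. by rewrite /assoc_beta -[_ - x - y]addrA -opprD addrC addNKr. Qed.

Section MoufangPermutation.

Variables (X : zmodType) (f finv : X -> X).
Hypotheses (fK : cancel f finv) (finvK : cancel finv f).

Local Notation beta := (assoc_beta f finv).
Local Notation f3 x := (f (f (f x))).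
Local Notation finv3 x := (finv (finv (finv x))).

Lemma perm_f3 : is_perm_with_inv (fun x => f3 x) (fun x => finv3 x).
Proof. by split=> x; rewrite ?fK ?finvK. Qed.

Hypothesis beta_sym : forall x y, beta x y = beta y x.
Hypothesis beta_nil : forall x y z, beta (beta x y) z = 0.
Hypothesis beta_f : forall x y, beta (f x) (f y) = f (beta (f3 x) y).

Lemma beta_nil_r (x u v : X) : beta x (beta u v) = 0.
Proof. by rewrite beta_sym beta_nil. Qed.

(* (P3) read backwards: finv sends beta u v to a value of beta. *)
Lemma finv_beta (u v : X) : finv (beta u v) = beta (f (f u)) (finv v).
Proof. by rewrite -{1}(finvK u) -{1}(finvK v) beta_f fK finvK. Qed.

Lemma finv_beta_f (x y : X) : finv (beta (f x) (f y)) = beta (f3 x) y.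
Proof. by rewrite beta_f fK. Qed.

Lemma finv_add_beta (p u v : X) :
  finv (p + beta u v) = finv p + finv (beta u v).
Proof.
rewrite -{1}(finvK p) -{1}(finvK (beta u v)) finv_add_assoc_beta.
by rewrite [in beta _ (finv (beta u v))]finv_beta beta_nil_r addr0.
Qed.

Lemma beta_f3_sym (x y : X) : beta (f3 x) y = beta x (f3 y).
Proof. by apply: (can_inj fK); rewrite -beta_f beta_sym beta_f beta_sym. Qed.

Lemma finv3_beta (x y : X) : finv3 (beta x y) = beta (f3 x) y.
Proof. by rewrite !finv_beta (beta_f3_sym (f3 x)) !finvK. Qed.

Lemma finv3_add_f3 (x y : X) :
  finv3 (f3 x + f3 y)
  = x + y + beta x y + finv3 (beta x y) + finv3 (finv3 (beta x y)).
Proof.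
have step1 : finv (f3 x + f3 y)
             = f (f x) + f (f y) + beta (f (f x)) (f (f y)).
  exact: finv_add_assoc_beta.
have step2 : finv (f (f x) + f (f y) + beta (f (f x)) (f (f y)))
             = f x + f y + beta (f x) (f y) + beta (f3 (f x)) (f y).
  by rewrite finv_add_beta finv_add_assoc_beta finv_beta_f.
have step3 : finv (f x + f y + beta (f x) (f y) + beta (f3 (f x)) (f y))
             = x + y + beta x y + beta (f3 x) y + beta (f3 (f3 x)) y.
  by rewrite finv_add_beta finv_add_beta finv_add_assoc_beta !finv_beta_f.
by rewrite step1 step2 step3 !finv3_beta.
Qed.

End MoufangPermutation.

Theorem mainTheorem14 (X : zmodType) (f finv : X -> X) :
  moufang_perm f finv ->
  construction_pair (fun x => f (f (f x))) (fun x => finv (finv (finv x)))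
                    (assoc_beta f finv).
Proof.
move=> [[fK finvK] beta_biadd beta_nil beta_f].
have [beta_sym _ _] := beta_biadd.
split=> //.
- exact: perm_f3.
- exact: finv3_add_f3.
- by move=> x y; rewrite finv3_beta.
Qed.
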